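(* Let $M\in\mathrm{M}_n(\mathbb{K})$ be a cyclic matrix with minimal polynomial $f\in\mathbb{K}[x]$, and let $\mathcal{C}\subseteq\mathbb{L}^n$ be an $M$-cyclic code with generator polynomial $g\in\mathbb{L}[x]$; write $f=gh$. Then $\mathcal{C}^\perp$ is an $M^t$-cyclic code (with $M^t$ cyclic with minimal polynomial $f$), and its generator polynomial is $h$.
   Context: Let $\mathbb{L}/\mathbb{K}$ be a field extension of finite degree $m\ge n$. Vectors are row vectors; $\mathcal{C}^\perp=\{c'\in\mathbb{L}^n:\sum_jc'_jc_j=0\ \forall c\in\mathcal{C}\}$. A matrix $A\in\mathrm{M}_n(\mathbb{K})$ is cyclic if there is $v\in\mathbb{K}^n$ (a cyclic vector) with $(v,vA^t,\dots,v(A^t)^{n-1})$ a basis; equivalently its minimal polynomial $f$ has degree $n$. An $A$-cyclic code is an $\mathbb{L}$-subspace $\mathcal{C}\subseteq\mathbb{L}^n$ with $cA^t\in\mathcal{C}$ for all $c\in\mathcal{C}$. For a monic divisor $g$ of $f$ in $\mathbb{L}[x]$, $\mathcal{C}_g=\{v\,g(A)^tP(A)^t:P\in\mathbb{L}[x]\}$ (independent of the cyclic vector $v\in\mathbb{K}^n$, of dimension $n-\deg g$); every $A$-cyclic code equals $\mathcal{C}_g$ for a unique monic divisor $g$ of $f$, its generator polynomial. *)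

From HB Require Import structures.
From mathcomp Require Import all_boot all_order all_algebra all_field.
Set Implicit Arguments. Unset Strict Implicit. Unset Printing Implicit Defensive.
Import GRing.Theory.
Local Open Scope ring_scope.

(* Vectors are row vectors; codes are L-subspaces of L^n, represented as the
   row space of a matrix (mxalgebra, %MS). Length is n.+1. *)

Definition cyclic_vec (F : fieldType) (n : nat) (A : 'M[F]_n) (v : 'rV[F]_n) :=
  let B := \matrix_(i < n) (v *m (A^T) ^+ i) in row_free B && row_full B.

Definition cyclic_mx (F : fieldType) (n : nat) (A : 'M[F]_n) :=
  exists v : 'rV[F]_n, cyclic_vec A v.

Definition cyclic_code (L : fieldType) (n k : nat) (A : 'M[L]_n)
  (C : 'M[L]_(k, n)) := (C *m A^T <= C)%MS.

Definition dual_code (L : fieldType) (n k : nat) (C : 'M[L]_(k, n)) : 'M[L]_n :=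
  kermx C^T.

Definition mxL (K : fieldType) (L : fieldExtType K) (m n : nat)
  (A : 'M[K]_(m, n)) : 'M[L]_(m, n) := map_mx (in_alg L) A.

Definition is_Cg (K : fieldType) (L : fieldExtType K) (n k : nat)
  (A : 'M[K]_n.+1) (v : 'rV[K]_n.+1) (g : {poly L}) (C : 'M[L]_(k, n.+1)) :=
  forall x : 'rV[L]_n.+1,
    (x <= C)%MS <->
    exists P : {poly L},
      x = mxL L v *m (horner_mx (mxL L A) g)^T *m (horner_mx (mxL L A) P)^T.

Definition generator_poly (K : fieldType) (L : fieldExtType K) (n k : nat)
  (A : 'M[K]_n.+1) (C : 'M[L]_(k, n.+1)) (g : {poly L}) :=
  [/\ g \is monic, g %| map_poly (in_alg L) (mxminpoly A)
    & exists2 v, cyclic_vec A v & is_Cg A v g C].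

From HB Require Import structures.
From mathcomp Require Import all_boot all_order all_algebra all_field.
From mathcomp Require Import zify.
Import GRing.Theory.
Local Open Scope ring_scope.
Set Implicit Arguments. Unset Strict Implicit.

(* If v is a cyclic vector of A^T, the words of C_g are v (gP)(A^T), and for
   any w the word w (hQ)(A) is orthogonal to all of them: the pairing is
   v ((gh)PQ)(A^T) w^T, which vanishes because f = gh kills A.  For w cyclic
   for A (the functional "coefficient of x^n" in the basis v (A^T)^i is one),
   the multiples of h span a space of dimension n + 1 - deg h, which is the
   dimension n + 1 - dim C_g = deg g of the dual, so they exhaust it. *)

Section HornerTranspose.
Variables (F : fieldType) (n : nat).
Implicit Types (A : 'M[F]_n.+1) (p q : {poly F}).

Lemma horner_mx_sum A p m :
  (size p <= m)%N -> horner_mx A p = \sum_(i < m) p`_i *: A ^+ i.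
Proof.
move=> sp; have -> : horner_mx A p = horner_mx A (\poly_(i < m) p`_i).
  congr horner_mx; apply/polyP => i; rewrite coef_poly; case: ltnP => // hi.
  by rewrite nth_default // (leq_trans sp hi).
rewrite poly_def rmorph_sum; apply: eq_bigr => i _.
rewrite -mul_polyC rmorphM /= horner_mx_C rmorphXn /= horner_mx_X.
by rewrite -mulmxE mul_scalar_mx.
Qed.

Lemma trmxX A i : (A ^+ i)^T = A^T ^+ i.
Proof.
elim: i => [|i IH]; first by rewrite !expr0 trmx1.
by rewrite exprS trmx_mul IH exprSr.
Qed.

Lemma trmx_horner A p : (horner_mx A p)^T = horner_mx A^T p.
Proof.
rewrite !(horner_mx_sum _ (leqnn (size p))) linear_sum.
by apply: eq_bigr => i _; rewrite linearZ /= trmxX.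
Qed.

Lemma mulmx_horner m (X : 'M_(m, n.+1)) A p q :
  X *m horner_mx A p *m horner_mx A q = X *m horner_mx A (p * q).
Proof. by rewrite -mulmxA rmorphM mulmxE. Qed.

Lemma mxminpoly_tr A : mxminpoly A^T = mxminpoly A.
Proof.
apply/eqP; rewrite -eqp_monic ?mxminpoly_monic //; apply/andP; split;
  apply: mxminpoly_min.
  by rewrite -trmx_horner mx_root_minpoly trmx0.
by apply: trmx_inj; rewrite trmx_horner mx_root_minpoly trmx0.
Qed.

Lemma size_mxminpoly_le A : (size (mxminpoly A) <= n.+2)%N.
Proof.
rewrite -(size_char_poly A) dvdp_leq ?mxminpoly_dvd_char //.
by rewrite -size_poly_eq0 size_char_poly.
Qed.

End HornerTranspose.

Definition krylov (F : fieldType) n (A : 'M[F]_n) (u : 'rV_n) :=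
  \matrix_(i < n) (u *m A ^+ i).

Lemma cyclic_vecE (F : fieldType) n (A : 'M[F]_n) v :
  cyclic_vec A v = (krylov A^T v \in unitmx).
Proof. by rewrite /cyclic_vec row_free_unit row_full_unit andbb. Qed.

Lemma map_krylov (K : fieldType) (L : fieldExtType K) n (A : 'M[K]_n) u :
  mxL L (krylov A u) = krylov (mxL L A) (mxL L u).
Proof.
by apply/row_matrixP => i; rewrite /mxL -map_row !rowK map_mxM rmorphXn.
Qed.

Section Krylov.
Variables (F : fieldType) (n : nat) (A : 'M[F]_n.+1) (u : 'rV[F]_n.+1).
Implicit Types p : {poly F}.

Lemma mul_horner_krylov p : (size p <= n.+1)%N ->
  u *m horner_mx A p = (\row_(i < n.+1) p`_i) *m krylov A u.
Proof.
move=> sp; rewrite (horner_mx_sum A sp) mulmx_sumr mulmx_sum_row.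
by apply: eq_bigr => i _; rewrite mxE rowK scalemxAr.
Qed.

Lemma mul_horner_krylov_eq0 p : row_free (krylov A u) -> (size p <= n.+1)%N ->
  u *m horner_mx A p = 0 -> p = 0.
Proof.
move=> Ufree sp; rewrite mul_horner_krylov // -(mul0mx _ (krylov A u)).
move/(row_free_inj Ufree)/rowP => coef_p.
apply/polyP => i; rewrite coef0; case: (ltnP i n.+1) => hi.
  by have := coef_p (Ordinal hi); rewrite !mxE.
by rewrite nth_default // (leq_trans sp hi).
Qed.

(* Evaluating at a polynomial of degree <= n and pairing with the last
   coordinate functional of the basis krylov A u reads off its x^n coefficient. *)
Lemma krylov_last_coord p : krylov A u \in unitmx -> (size p <= n.+1)%N ->
  u *m horner_mx A p *m (invmx (krylov A u) *m delta_mx ord_max 0) = (p`_n)%:M.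
Proof.
move=> Uunit sp; rewrite mul_horner_krylov // mulmxA mulmxK //.
apply/matrixP => i j; rewrite !ord1 !mxE (bigD1 ord_max) //= !mxE eqxx mulr1.
by rewrite big1 ?addr0 // => k /negPf nk; rewrite !mxE nk mulr0.
Qed.

Definition poly_mult_mx p :=
  \matrix_(i < n.+2 - size p) (u *m horner_mx A (p * 'X^i)).

Lemma mul_poly_mult_mx p (y : 'rV_(n.+2 - size p)) :
  y *m poly_mult_mx p = u *m horner_mx A (p * rVpoly y).
Proof.
rewrite mulmx_sum_row /rVpoly poly_def mulr_sumr rmorph_sum mulmx_sumr.
by apply: eq_bigr => i _; rewrite valK rowK -scalerAr scalemxAr -horner_mxZ.
Qed.

Lemma poly_mult_mx_free p : row_free (krylov A u) -> p != 0 ->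
  row_free (poly_mult_mx p).
Proof.
move=> Ufree p0; apply: inj_row_free => y.
have [sp|sp] := leqP (size p) n.+1; last first.
  by move=> _; apply/rowP => i; have := ltn_ord i; lia.
have sy : (size (rVpoly y) <= n.+2 - size p)%N by apply: size_poly.
have p_gt0 : (0 < size p)%N by rewrite size_poly_gt0.
rewrite mul_poly_mult_mx => /(mul_horner_krylov_eq0 Ufree) py0.
have /eqP : p * rVpoly y = 0.
  by apply: py0; apply: leq_trans (size_polyMleq _ _) _; lia.
rewrite mulf_eq0 (negPf p0) /= => /eqP y0.
by rewrite -[y]rVpolyK y0 linear0.
Qed.

End Krylov.

Lemma krylov_tr_unit (F : fieldType) n (A : 'M[F]_n.+1) v :
  krylov A^T v \in unitmx -> exists w, krylov A w \in unitmx.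
Proof.
move=> Vunit.
pose e : 'cV[F]_n.+1 := invmx (krylov A^T v) *m delta_mx ord_max 0.
exists e^T; rewrite -row_free_unit; apply: inj_row_free => y.
rewrite -[y]rVpolyK; set q := rVpoly y.
have sq : (size q <= n.+1)%N by apply: size_poly.
rewrite -(_ : e^T *m horner_mx A q = _ *m krylov A e^T); last first.
  by rewrite mul_horner_krylov //; congr (_ *m _); apply/rowP => i; rewrite !mxE.
have [-> _|q0 eq0] := eqVneq q 0; first by rewrite linear0.
have q_gt0 : (0 < size q)%N by rewrite size_poly_gt0.
have: v *m horner_mx A^T (q * 'X^(n.+1 - size q)) *m e = 0.
  rewrite -trmx_horner rmorphM /= -[e]trmxK -mulmxA -trmx_mul mulmxA eq0.
  by rewrite mul0mx trmx0 mulmx0.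
rewrite krylov_last_coord //; last by rewrite size_mulXn //; lia.
rewrite coefMXn ifF; last by lia.
rewrite (_ : (n - _ = (size q).-1)%N); last by lia.
move/matrixP/(_ 0 0); rewrite !mxE mulr1n -lead_coefE => /eqP.
by rewrite lead_coef_eq0 (negPf q0).
Qed.

Lemma dual_code_cyclic (F : fieldType) n k (A : 'M[F]_n) (C : 'M_(k, n)) :
  cyclic_code A C -> cyclic_code A^T (dual_code C).
Proof.
case/submxP=> D CAD; apply/sub_kermxP.
have AC : A *m C^T = C^T *m D^T by rewrite -[A]trmxK -trmx_mul CAD trmx_mul.
by rewrite trmxK -mulmxA AC mulmxA mulmx_ker mul0mx.
Qed.

Definition poly_code (F : fieldType) n k (A : 'M[F]_n.+1) (u : 'rV_n.+1)
    (p : {poly F}) (X : 'M_(k, n.+1)) :=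
  forall x : 'rV_n.+1, (x <= X)%MS <-> exists P, x = u *m horner_mx A (p * P).

Lemma is_CgE (K : fieldType) (L : fieldExtType K) n k (A : 'M[K]_n.+1) v g
    (C : 'M[L]_(k, n.+1)) :
  is_Cg A v g C <-> poly_code (mxL L A)^T (mxL L v) g C.
Proof.
have E P : mxL L v *m (horner_mx (mxL L A) g)^T *m (horner_mx (mxL L A) P)^T
    = mxL L v *m horner_mx (mxL L A)^T (g * P).
  by rewrite !trmx_horner mulmx_horner.
by split=> Cg x; rewrite Cg; split=> -[P ->]; exists P; rewrite E.
Qed.

Section DualPolyCode.
Variables (F : fieldType) (n k : nat) (A : 'M[F]_n.+1) (v w : 'rV[F]_n.+1).
Variables (g h : {poly F}) (C : 'M[F]_(k, n.+1)).
Hypotheses (Vfree : row_free (krylov A^T v)) (Wfree : row_free (krylov A w)).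
Hypotheses (g0 : g != 0) (h0 : h != 0).
Hypotheses (gh_root : horner_mx A (g * h) = 0).
Hypothesis size_gh : (size (g * h)%R <= n.+2)%N.
Hypothesis Cg : poly_code A^T v g C.

Lemma poly_code_orth P : (w *m horner_mx A (h * P) <= dual_code C)%MS.
Proof.
apply/sub_kermxP; apply: trmx_inj; rewrite trmx_mul trmxK trmx0.
apply/row_matrixP => i; rewrite row0 row_mul.
have [Q ->] := (Cg (row i C)).1 (row_sub i C).
rewrite !trmx_mul !trmx_horner !mulmxA mulmx_horner.
rewrite (_ : g * Q * (h * P) = (g * h) * (Q * P)); last first.
  by rewrite -!mulrA; congr (_ * _); rewrite mulrCA.
by rewrite rmorphM /= -trmx_horner gh_root trmx0 mul0r mulmx0 mul0mx.
Qed.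

Lemma rank_dual_code_le : (\rank (dual_code C) <= n.+2 - size h)%N.
Proof.
have GC : (poly_mult_mx A^T v g <= C)%MS.
  by apply/row_subP => i; rewrite rowK; apply/(Cg _).2; exists 'X^i.
rewrite /dual_code mxrank_ker mxrank_tr.
move: (mxrankS GC) size_gh; rewrite (eqnP (poly_mult_mx_free Vfree g0)) size_mul //.
have := size_poly_gt0 g; have := size_poly_gt0 h; rewrite g0 h0.
move: (size g) (size h) (\rank C) => a b c; lia.
Qed.

Lemma dual_poly_code : poly_code A w h (dual_code C).
Proof.
move=> x; split=> [xC|[P ->]]; last exact: poly_code_orth.
pose T := poly_mult_mx A w h.
have TC : (T <= dual_code C)%MS.
  by apply/row_subP => i; rewrite rowK; apply: poly_code_orth.
have CT : (dual_code C <= T)%MS.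
  rewrite -(mxrank_leqif_sup TC).2 eqn_leq (mxrankS TC) /=.
  by rewrite (eqnP (poly_mult_mx_free Wfree h0)) rank_dual_code_le.
have [D ->] := submxP (submx_trans xC CT).
by exists (rVpoly D); rewrite mul_poly_mult_mx.
Qed.

End DualPolyCode.

Theorem proposition4 (K : fieldType) (L : fieldExtType K) (n k : nat)
  (M : 'M[K]_n.+1) (C : 'M[L]_(k, n.+1)) (g h : {poly L}) :
  (n.+1 <= \dim {: L})%N ->
  cyclic_mx M ->
  cyclic_code (mxL L M) C ->
  generator_poly M C g ->
  map_poly (in_alg L) (mxminpoly M) = g * h ->
  [/\ cyclic_mx M^T, mxminpoly M^T = mxminpoly M,
      cyclic_code (mxL L M^T) (dual_code C)
    & generator_poly M^T (dual_code C) h].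
Proof.
move=> _ _ cycC [g_monic _ [v v_cyc Cg]] fgh.
rewrite cyclic_vecE in v_cyc; have [w w_unit] := krylov_tr_unit v_cyc.
have w_cyc : cyclic_vec M^T w by rewrite cyclic_vecE trmxK.
have mxL_tr : mxL L M^T = (mxL L M)^T by rewrite /mxL map_trmx.
have fL : mxminpoly (mxL L M) = g * h by rewrite mxminpoly_map.
have h_monic : h \is monic by rewrite -(monicMl _ g_monic) -fL mxminpoly_monic.
split; first by exists w.
- exact: mxminpoly_tr.
- by rewrite mxL_tr; exact: dual_code_cyclic.
split=> //; first by rewrite mxminpoly_tr fgh dvdp_mulIr.
exists w => //; apply/is_CgE; rewrite mxL_tr trmxK.
apply: (dual_poly_code (v := mxL L v) (g := g)); rewrite ?monic_neq0 //.
- by rewrite -mxL_tr -map_krylov row_free_map row_free_unit.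
- by rewrite -map_krylov row_free_map row_free_unit.
- by rewrite -fL mx_root_minpoly.
- by rewrite -fL size_mxminpoly_le.
- exact/is_CgE.
Qed.
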